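(* Let $A=\{a_{ij}: i,j\ge1\}$ with $a_{ij}\prec a_{kl}$ iff $j=k$. For a permutation $\sigma\in\mathfrak S_n$ define $$\mathbf S^\sigma(A)=\sum_{i_1,\dots,i_n\ge1}a_{i_{\sigma^{-1}(1)}i_1}a_{i_{\sigma^{-1}(2)}i_2}\cdots a_{i_{\sigma^{-1}(n)}i_n}.$$ Then: (i) $\mathbf S^\sigma(A)$ equals the sum of all words $w_1\cdots w_n$ over $A$ with $w_j\prec w_{\sigma(j)}$ for all $j\in[n]$; (ii) the $\mathbf S^\sigma$, $\sigma$ ranging over all permutations of all $[n]$, $n\ge0$, are linearly independent; (iii) $\mathbf S^\sigma\mathbf S^\tau=\mathbf S^{\sigma\bullet\tau}$; (iv) defining $\mathbf S^\sigma(A\oplus B)$ as the sum of all words $w$ over $A\oplus B$ with $w_j\prec w_{\sigma(j)}$ for all $j$, and letting letters of $A$ commute with those of $B$, $$\mathbf S^\sigma(A\oplus B)=\sum_{C}\mathbf S^{\mathrm{std}(\sigma_{|[n]\setminus U_C})}(A)\,\mathbf S^{\mathrm{std}(\sigma_{|U_C})}(B),$$ the sum over all sets $C$ of cycles of $\sigma$, where $U_C$ is the union of the supports of the cycles in $C$. Thus the span of the $\mathbf S^\sigma$ with coproduct $\Delta F=F(A\oplus B)$ is a Hopf algebra isomorphic to the Grossman–Larson-type cocommutative Hopf algebra $\mathbf{SGSym}$ of permutations.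
   Context: $\sigma\bullet\tau$ denotes shifted concatenation: for $\sigma\in\mathfrak S_n,\tau\in\mathfrak S_m$, the permutation of $[n+m]$ with word $\sigma(1)\cdots\sigma(n)(\tau(1)+n)\cdots(\tau(m)+n)$. $B=\{b_{ij}:i,j\ge1\}$ is a disjoint copy of $A$ with the same relation; $A\oplus B$ is the disjoint union with the relations of $A$ and of $B$ together with $a\prec b$ for all $a\in A$, $b\in B$ (never $b\prec a$). For $U\subseteq[n]$ stable under a function $f$, $\mathrm{std}(f_{|U})=\tau_U\circ f_{|U}\circ\tau_U^{-1}$ where $\tau_U:U\to[|U|]$ is the increasing bijection. $\mathbf{SGSym}$ is the Hopf algebra with basis $\mathbf S^\sigma$ (all permutations), product $\mathbf S^\sigma\mathbf S^\tau=\mathbf S^{\sigma\bullet\tau}$ and coproduct obtained by splitting the set of cycles of $\sigma$ in two parts in all ways and standardizing, as in (iv). *)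

From HB Require Import structures.
From mathcomp Require Import all_boot all_order all_fingroup all_algebra.
From Stdlib Require Import Classical ClassicalEpsilon.
Set Implicit Arguments. Unset Strict Implicit. Unset Printing Implicit Defensive.
Import GRing.Theory.
Local Open Scope ring_scope.

(* Letters of A: the pair (i, j) : nat * nat stands for a_{i+1, j+1}
   (0-based reindexing of the index set {1,2,...}). *)
Definition letter := (nat * nat)%type.

Definition precA (x y : letter) : bool := x.2 == y.1.

(* Letters of A (+) B: inl = letter of A, inr = letter of B. *)
Definition letterAB := (letter + letter)%type.
Definition precAB (x y : letterAB) : bool :=
  match x, y with
  | inl a, inl a' => precA a a'
  | inr b, inr b' => precA b b'
  | inl _, inr _ => true
  | inr _, inl _ => false
  end.

Definition series (K : nzRingType) (W : Type) := W -> K.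

(* Formal sum of a locally finite family of monomials f : I -> W (each
   with coefficient 1): the coefficient of w is the number of indices i
   with f i = w (0 if that preimage is infinite, which never happens for
   the families used below). *)
Definition preim_enum (I W : eqType) (f : I -> W) (w : W) (l : seq I) : Prop :=
  uniq l /\ forall i, i \in l <-> f i = w.

Definition fam_coef (I W : eqType) (f : I -> W) (w : W) : nat :=
  match excluded_middle_informative (exists l, preim_enum f w l) with
  | left H => size (proj1_sig (constructive_indefinite_description _ H))
  | right _ => 0%N
  end.

Definition fam_sum (K : nzRingType) (I W : eqType) (f : I -> W) : series K W :=
  fun w => (fam_coef f w)%:R.

Definition monoS n (s : 'S_n) (i : n.-tuple nat) : seq letter :=
  [seq (tnth i ((s^-1)%g k), tnth i k) | k <- enum 'I_n].

Definition SA (K : nzRingType) n (s : 'S_n) : series K (seq letter) :=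
  fam_sum K (@monoS n s).

Definition condS (T : Type) (prec : T -> T -> bool) (x0 : T) n (s : 'S_n)
  (w : seq T) : bool :=
  (size w == n) && [forall j : 'I_n, prec (nth x0 w j) (nth x0 w (s j))].

Definition sermul (K : nzRingType) (T : Type) (F G : series K (seq T))
  : series K (seq T) :=
  fun w => \sum_(i < (size w).+1) F (take i w) * G (drop i w).

Definition pcat_fun n m (s : 'S_n) (t : 'S_m) (i : 'I_(n + m)) : 'I_(n + m) :=
  match split i with
  | inl j => lshift m (s j)
  | inr k => rshift n (t k)
  end.

Lemma pcat_inj n m (s : 'S_n) (t : 'S_m) : injective (pcat_fun s t).
Proof.
move=> i j; rewrite /pcat_fun.
case: splitP => a Ha; case: splitP => b Hb /(congr1 val) /= E; apply/val_inj/eqP; rewrite /= Ha Hb; apply/eqP.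
- by rewrite (perm_inj (val_inj E)).
- by have := ltn_ord (s a); rewrite E ltnNge leq_addr.
- by have := ltn_ord (s b); rewrite -E ltnNge leq_addr.
- by move/addnI/val_inj/perm_inj: E => ->.
Qed.

Definition pcat n m (s : 'S_n) (t : 'S_m) : 'S_(n + m) := perm (@pcat_inj n m s t).

Definition mk_perm (T : finType) (g : T -> T) : {perm T} :=
  match @injectiveP T T g with
  | ReflectT H => perm H
  | ReflectF _ => 1%g
  end.

(* std(s_{|U}) = tau_U o s_{|U} o tau_U^{-1}, tau_U : U -> [|U|] increasing
   (enum of a set of ordinals is increasing). Meaningful for s-stable U. *)
Definition std_fun n (s : 'S_n) (U : {set 'I_n}) (k : 'I_#|U|) : 'I_#|U| :=
  enum_rank_in (enum_valP k) (s (enum_val k)).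

Definition std n (s : 'S_n) (U : {set 'I_n}) : 'S_#|U| := mk_perm (@std_fun n s U).

(* Image in the algebra where letters of A commute with letters of B:
   a word over A (+) B is sent to (its A-subword, its B-subword). *)
Definition projAB (w : seq letterAB) : seq letter * seq letter :=
  (pmap (fun x => if x is inl a then Some a else None) w,
   pmap (fun x => if x is inr b then Some b else None) w).

Definition SAB (K : nzRingType) n (s : 'S_n)
  : series K (seq letter * seq letter) :=
  fam_sum K (fun w : {w : seq letterAB | condS precAB (inl (0%N,0%N)) s w} =>
               projAB (val w)).

(* A monomial of S^σ is determined by its index tuple, which can be read off
   the second coordinates of the monomial; conversely a word w is a monomial
   of S^σ iff the first coordinate of w_{σ(j)} equals the second coordinate
   of w_j, i.e. iff w_j ≺ w_{σ(j)}. So S^σ is the characteristic series of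
   the words satisfying that condition (i). Evaluating at the word
   (j, σ(j))_j singles out σ among all permutations (ii); the condition for
   σ•τ splits at position n into the conditions for σ and τ (iii). For (iv),
   since b ≺ a never holds, the set of B-positions of an admissible word over
   A ⊕ B is σ-stable, hence a union U_C of cycles, and on U_C and on its
   complement the condition becomes that for the standardized restrictions;
   the word is recovered from C and its A- and B-subwords. *)
From HB Require Import structures.
From mathcomp Require Import all_boot all_order all_fingroup all_algebra.
From Stdlib Require Import FunctionalExtensionality ClassicalEpsilon.
Import GRing.Theory.
Local Open Scope ring_scope.

Local Notation a0 := ((0%N, 0%N) : letter).

Lemma fam_coefE (I W : eqType) (f : I -> W) (w : W) (l : seq I) :
  uniq l -> (forall i, i \in l <-> f i = w) -> fam_coef f w = size l.
Proof.
move=> ul Hl; rewrite /fam_coef.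
case: excluded_middle_informative => [H|]; last by case; exists l.
case: (constructive_indefinite_description _ H) => l' [ul' Hl'] /=.
apply/perm_size/uniq_perm => // i.
by apply/idP/idP => [/Hl' /Hl|/Hl /Hl'].
Qed.

Lemma condS_size {T : Type} {prec : rel T} {x0 : T} {n} {s : 'S_n} {w : seq T} :
  condS prec x0 s w -> size w = n.
Proof. by case/andP => /eqP. Qed.

Definition snd_tuple n (w : seq letter) : n.-tuple nat :=
  [tuple (nth a0 w i).2 | i < n].

Lemma monoS_eqP n (s : 'S_n) (i : n.-tuple nat) (w : seq letter) :
  monoS s i = w <-> condS precA a0 s w /\ i = snd_tuple n w.
Proof.
split=> [<-|[/andP[/eqP sz /forallP cond] ->]].
  have nth_mono (k : 'I_n) : nth a0 (monoS s i) k = (tnth i ((s^-1)%g k), tnth i k).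
    by rewrite (nth_map k) ?size_enum_ord // nth_ord_enum.
  split; last by apply: eq_from_tnth => k; rewrite tnth_mktuple nth_mono.
  rewrite /condS size_map size_enum_ord eqxx.
  by apply/forallP => j; rewrite /precA !nth_mono permK.
apply: (@eq_from_nth _ a0); first by rewrite size_map size_enum_ord sz.
move=> k; rewrite size_map size_enum_ord => lt_kn.
rewrite (nth_map (Ordinal lt_kn)) ?size_enum_ord //.
rewrite -[k]/(val (Ordinal lt_kn)) nth_ord_enum !tnth_mktuple.
have := cond ((s^-1)%g (Ordinal lt_kn)); rewrite /precA permKV => /eqP ->.
by case: (nth _ w k).
Qed.

Lemma SAE (K : nzRingType) n (s : 'S_n) (w : seq letter) :
  SA K s w = (condS precA a0 s w)%:R.
Proof.
rewrite /SA /fam_sum; case cond: (condS precA a0 s w).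
  rewrite (@fam_coefE _ _ _ _ [:: snd_tuple n w]) // => i.
  by rewrite inE; split=> [/eqP ->|/monoS_eqP[_ ->]] //; apply/monoS_eqP.
rewrite (@fam_coefE _ _ _ _ [::]) // => i.
by split=> // /monoS_eqP[]; rewrite cond.
Qed.

Definition graph_word {n} (s : 'S_n) : seq letter :=
  [seq (val j, val (s j)) | j <- enum 'I_n].

Lemma condS_graph_word n (s : 'S_n) (p : {m : nat & 'S_m}) :
  condS precA a0 (tagged p) (graph_word s) = (p == existT _ n s).
Proof.
case: p => m t /=; rewrite /condS size_map size_enum_ord.
have [e|ne_mn] := eqVneq m n; last first.
  by apply/esym/negP => /eqP[e]; rewrite e eqxx in ne_mn.
subst m => /=.
have nth_graph (k : 'I_n) : nth a0 (graph_word s) k = (val k, val (s k)).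
  by rewrite (nth_map k) ?size_enum_ord // nth_ord_enum.
rewrite -/(Tagged _ t) eq_Tagged /=.
apply/forallP/eqP => [cond|-> j]; last by rewrite /precA !nth_graph.
by apply/permP => j; have := cond j; rewrite /precA !nth_graph => /eqP/val_inj.
Qed.

Lemma SA_lin_indep (K : nzRingType) (ps : seq {n : nat & 'S_n})
    (c : {n : nat & 'S_n} -> K) :
  uniq ps -> (forall w, \sum_(p <- ps) c p * SA K (tagged p) w = 0) ->
  forall p, p \in ps -> c p = 0.
Proof.
move=> uniq_ps vanish [n s] ps_s.
have := vanish (graph_word s); rewrite (bigD1_seq _ ps_s uniq_ps) /= big1_seq.
  by rewrite SAE (@condS_graph_word n s (existT _ n s)) eqxx mulr1 addr0.
by move=> q /andP[ne_qs _]; rewrite SAE condS_graph_word (negPf ne_qs) mulr0.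
Qed.

Lemma condS_pcat (T : Type) (prec : rel T) x0 n m (s : 'S_n) (t : 'S_m) w :
  size w = (n + m)%N ->
  condS prec x0 (pcat s t) w = condS prec x0 s (take n w) && condS prec x0 t (drop n w).
Proof.
move=> sz; rewrite /condS sz eqxx size_drop sz addKn size_takel ?sz ?leq_addr // !eqxx /=.
apply/forallP/andP => [cond|[/forallP cond_s /forallP cond_t] j].
  split; apply/forallP => j.
    have := cond (lshift m j); rewrite permE /pcat_fun.
    by rewrite -[lshift m j]/(unsplit (inl j)) unsplitK /= !nth_take.
  have := cond (rshift n j); rewrite permE /pcat_fun.
  by rewrite -[rshift n j]/(unsplit (inr j)) unsplitK /= !nth_drop.
rewrite permE /pcat_fun; case: splitP => [a|b] ->.
  by have := cond_s a; rewrite !nth_take.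
by have := cond_t b; rewrite !nth_drop.
Qed.

(* Only the cut at position n contributes to the Cauchy product. *)
Lemma SA_mul (K : nzRingType) n m (s : 'S_n) (t : 'S_m) :
  sermul (SA K s) (SA K t) = SA K (pcat s t).
Proof.
apply: functional_extensionality => w; rewrite /sermul SAE.
under eq_bigr => i _ do rewrite !SAE -natrM mulnb.
have cut_at_n (i : 'I_(size w).+1) : condS precA a0 s (take i w) -> val i = n.
  by move/condS_size; rewrite size_takel // -ltnS.
have [lt_wn|le_nw] := ltnP (size w) n.
  rewrite big1 => [|i _]; last first.
    case cond: (condS _ _ s _) => //; move/cut_at_n: cond lt_wn => <-.
    by rewrite ltnNge -ltnS ltn_ord.
  case cond: (condS _ _ (pcat s t) _) => //.
  by move: lt_wn; rewrite (condS_size cond) ltnNge leq_addr.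
have lt_n_w1 : (n < (size w).+1)%N by [].
rewrite (bigD1 (Ordinal lt_n_w1)) //= big1 ?addr0 => [|i ne_in]; last first.
  case cond: (condS _ _ s _) => //; move/cut_at_n: cond ne_in => e.
  by rewrite -val_eqE /= e eqxx.
have [sz|ne_sz] := eqVneq (size w) (n + m)%N; first by rewrite condS_pcat.
case cond: (condS precA _ (pcat s t) w); first by rewrite (condS_size cond) eqxx in ne_sz.
case cond_t: (condS precA _ t _); last by rewrite andbF.
by move: ne_sz; rewrite -(condS_size cond_t) size_drop subnKC ?eqxx.
Qed.

Lemma filter_nth_ord {T : Type} (x0 : T) (p : pred T) {n} {w : seq T} : size w = n ->
  filter p w = [seq nth x0 w j | j : 'I_n <- enum [set j : 'I_n | p (nth x0 w j)]].
Proof.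
move=> sz.
have -> : enum [set j : 'I_n | p (nth x0 w j)] = [seq j : 'I_n <- enum 'I_n | p (nth x0 w j)].
  by rewrite /enum_mem -filter_predI; apply: eq_filter => j /=; rewrite in_set; case: (p _).
rewrite -(filter_map (nth x0 w \o val)) map_comp val_enum_ord -sz.
by rewrite map_nth_iota0 // take_size.
Qed.

Section Stable.

Context {n : nat} (s : 'S_n).

Definition stable (U : {set 'I_n}) := forall j, (s j \in U) = (j \in U).

Lemma closed_stable (U : {set 'I_n}) : {in U, forall j, s j \in U} -> stable U.
Proof.
move=> closedU j; have sU : s @: U = U.
  apply/eqP; rewrite eqEcard card_imset ?leqnn ?andbT; last exact: perm_inj.
  by apply/subsetP => _ /imsetP[i iU ->]; apply: closedU.
by rewrite -{1}sU mem_imset //; apply: perm_inj.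
Qed.

Lemma stableC (U : {set 'I_n}) : stable U -> stable (~: U).
Proof. by move=> stU j; rewrite !in_setC stU. Qed.

Lemma porbit_sub_stable (U : {set 'I_n}) j :
  stable U -> j \in U -> porbit s j \subset U.
Proof.
move=> stU jU; apply/subsetP => _ /porbitP[i ->].
by elim: i => [|i IH]; rewrite ?expg0 ?perm1 // expgSr permM stU.
Qed.

Lemma mem_cover_porbits (C : {set {set 'I_n}}) j :
  C \subset porbits s -> (j \in cover C) = (porbit s j \in C).
Proof.
move=> subC; apply/bigcupP/idP => [[X XC jX]|]; last by exists (porbit s j); rewrite ?porbit_id.
have /imsetP[x _ defX] := subsetP subC X XC.
by move: jX; rewrite defX -eq_porbit_mem => /eqP ->; rewrite -defX.
Qed.

Lemma stable_cover (C : {set {set 'I_n}}) : C \subset porbits s -> stable (cover C).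
Proof.
by move=> subC j; rewrite !mem_cover_porbits // -(porbit_perm s 1 j) expg1.
Qed.

Lemma cover_porbits_inj (C1 C2 : {set {set 'I_n}}) :
  C1 \subset porbits s -> C2 \subset porbits s -> cover C1 = cover C2 -> C1 = C2.
Proof.
move=> sub1 sub2 eqC; apply/setP => X.
wlog X1 : C1 C2 sub1 sub2 eqC / X \in C1.
  move=> wlog_X; apply/idP/idP => [X1|X2].
    by rewrite -(wlog_X C1 C2 sub1 sub2 eqC X1).
  by rewrite -(wlog_X C2 C1 sub2 sub1 (esym eqC) X2).
have /imsetP[x _ defX] := subsetP sub1 X X1.
by rewrite X1 defX -mem_cover_porbits // -eqC mem_cover_porbits // -defX.
Qed.

Lemma cover_porbits_stable (U : {set 'I_n}) :
  stable U -> cover [set X in porbits s | X \subset U] = U.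
Proof.
move=> stU; apply/setP => x; apply/bigcupP/idP => [[X]|xU].
  by rewrite inE => /andP[_ /subsetP XU] /XU.
exists (porbit s x); last exact: porbit_id.
by rewrite inE imset_f //= porbit_sub_stable.
Qed.

Lemma std_val (U : {set 'I_n}) (k : 'I_#|U|) :
  stable U -> enum_val (std s U k) = s (enum_val k).
Proof.
move=> stU.
have val_std_fun (i : 'I_#|U|) : enum_val (std_fun s i) = s (enum_val i).
  by rewrite /std_fun enum_rankK_in // stU enum_valP.
have inj_std_fun : injective (std_fun s (U := U)).
  by move=> i1 i2 e; apply/enum_val_inj/(@perm_inj _ s); rewrite -!val_std_fun e.
by rewrite /std /mk_perm; case: injectiveP => // inj_fun; rewrite permE.
Qed.

Lemma condS_std (T : Type) (prec : rel T) x0 (U : {set 'I_n}) (f : 'I_n -> T) :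
  stable U ->
  condS prec x0 (std s U) [seq f j | j <- enum U] = [forall j in U, prec (f j) (f (s j))].
Proof.
move=> stU; rewrite /condS size_map -cardE eqxx /=.
have nth_sub (k : 'I_#|U|) : nth x0 [seq f j | j <- enum U] k = f (enum_val k).
  rewrite (nth_map (enum_val k)) -?cardE ?ltn_ord //.
  by rewrite /enum_val; congr f; apply: set_nth_default; rewrite -cardE ltn_ord.
apply/forallP/forallP => [cond j|cond k].
  by apply/implyP => jU; have := cond (enum_rank_in jU j); rewrite !nth_sub std_val ?enum_rankK_in.
by rewrite !nth_sub std_val //; have := cond (enum_val k); rewrite enum_valP.
Qed.

End Stable.

Local Notation ab0 := (inl a0 : letterAB).

Definition is_inr (x : letterAB) : bool := if x is inr _ then true else false.
Definition unl (x : letterAB) : letter := if x is inl a then a else a0.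
Definition unr (x : letterAB) : letter := if x is inr b then b else a0.

Fixpoint interleave (m : seq bool) (u v : seq letter) : seq letterAB :=
  if m is b :: m' then
    if b then inr (head a0 v) :: interleave m' u (behead v)
    else inl (head a0 u) :: interleave m' (behead u) v
  else [::].

Lemma interleaveK w : interleave (map is_inr w) (projAB w).1 (projAB w).2 = w.
Proof. by elim: w => [|[a|b] w IH] //=; rewrite /projAB /= in IH *; rewrite IH. Qed.

Lemma map_is_inr_interleave m u v : map is_inr (interleave m u v) = m.
Proof. by elim: m u v => [|[] m IH] u v //=; rewrite IH. Qed.

Lemma size_interleave m u v : size (interleave m u v) = size m.
Proof. by rewrite -(size_map is_inr) map_is_inr_interleave. Qed.

Lemma projAB_interleave m u v :
  count negb m = size u -> count id m = size v -> projAB (interleave m u v) = (u, v).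
Proof.
elim: m u v => [|[] m IH] u v /=; first by case: u => //; case: v.
  case: v => // b v /= cnt_u [] cnt_v.
  by have := IH u v cnt_u cnt_v; rewrite /projAB /= => -[-> ->].
case: u => // a u /= [] cnt_u cnt_v.
by have := IH u v cnt_u cnt_v; rewrite /projAB /= => -[-> ->].
Qed.

Definition inr_pos n (w : seq letterAB) : {set 'I_n} := [set j : 'I_n | is_inr (nth ab0 w j)].

Lemma projAB_enum {n} {w : seq letterAB} : size w = n ->
  projAB w = ([seq unl (nth ab0 w j) | j : 'I_n <- enum (~: inr_pos n w)],
              [seq unr (nth ab0 w j) | j : 'I_n <- enum (inr_pos n w)]).
Proof.
move=> sz; have -> : projAB w = (map unl (filter (predC is_inr) w), map unr (filter is_inr w)).
  by elim: w {sz} => [|[a|b] w IH] //=; rewrite /projAB /= in IH *; case: IH => -> ->.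
rewrite (filter_nth_ord ab0 (predC is_inr) sz) (filter_nth_ord ab0 is_inr sz) -!map_comp.
have -> : [set j : 'I_n | predC is_inr (nth ab0 w j)] = ~: inr_pos n w.
  by apply/setP => j; rewrite !inE.
by [].
Qed.

(* Since b ≺ a never holds for a in A, b in B, the B-positions are σ-stable. *)
Lemma condS_AB {n} (s : 'S_n) (w : seq letterAB) : size w = n ->
  condS precAB ab0 s w <->
  [/\ stable s (inr_pos n w), condS precA a0 (std s (~: inr_pos n w)) (projAB w).1
    & condS precA a0 (std s (inr_pos n w)) (projAB w).2].
Proof.
move=> sz; rewrite (projAB_enum sz) /=; set U := inr_pos n w; split.
  case/andP => _ /forallP cond.
  have stU : stable s U.
    apply: closed_stable => j; rewrite !inE; have := cond j.
    by case: (nth ab0 w j) => a; case: (nth ab0 w (s j)).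
  split=> //; [rewrite condS_std; last exact: stableC | rewrite condS_std //];
    apply/forall_inP => j; have := stU j; have := cond j; rewrite ?in_setC !inE;
    by case: (nth ab0 w j) => a; case: (nth ab0 w (s j)).
case=> stU; rewrite condS_std; last exact: stableC.
rewrite condS_std // => /forall_inP condA /forall_inP condB.
rewrite /condS sz eqxx /=; apply/forallP => j.
have := stU j; have := condA j; have := condB j; rewrite in_setC !inE.
by case: (nth ab0 w j) => a; case: (nth ab0 w (s j)) => b /= condB_j condA_j // _;
  apply: condA_j.
Qed.

Definition set_mask {n} (U : {set 'I_n}) : seq bool := [seq j \in U | j <- enum 'I_n].

Lemma count_set_mask n (U : {set 'I_n}) : count id (set_mask U) = #|U|.
Proof. by rewrite count_map enumT cardE /enum_mem size_filter. Qed.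

Lemma count_negb_set_mask n (U : {set 'I_n}) : count negb (set_mask U) = #|~: U|.
Proof. by rewrite -count_set_mask !count_map; apply: eq_count => j /=; rewrite inE. Qed.

Lemma size_set_mask n (U : {set 'I_n}) : size (set_mask U) = n.
Proof. by rewrite size_map size_enum_ord. Qed.

Lemma nth_set_mask n (U : {set 'I_n}) (j : 'I_n) : nth false (set_mask U) j = (j \in U).
Proof. by rewrite (nth_map j) ?size_enum_ord // nth_ord_enum. Qed.

Lemma inr_pos_interleave n (U : {set 'I_n}) u v :
  inr_pos n (interleave (set_mask U) u v) = U.
Proof.
apply/setP => j; rewrite inE -nth_set_mask -{2}(map_is_inr_interleave (set_mask U) u v).
by rewrite (nth_map ab0) // size_interleave size_set_mask.
Qed.

Lemma set_mask_inr_pos n (w : seq letterAB) : size w = n ->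
  set_mask (inr_pos n w) = map is_inr w.
Proof.
move=> sz; apply: (@eq_from_nth _ false); first by rewrite size_set_mask size_map sz.
rewrite size_set_mask => k lt_kn.
by rewrite -[k]/(val (Ordinal lt_kn)) nth_set_mask (nth_map ab0) ?sz // inE.
Qed.

Section Coproduct.

Context {n : nat} (s : 'S_n) (u v : seq letter).

Definition split_ok (C : {set {set 'I_n}}) :=
  condS precA a0 (std s (~: cover C)) u && condS precA a0 (std s (cover C)) v.

Definition split_word (C : {set {set 'I_n}}) := interleave (set_mask (cover C)) u v.

Lemma split_wordP (C : {set {set 'I_n}}) : C \subset porbits s -> split_ok C ->
  condS precAB ab0 s (split_word C) /\ projAB (split_word C) = (u, v).
Proof.
move=> subC /andP[condA condB].
have proj_split : projAB (split_word C) = (u, v).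
  by apply: projAB_interleave;
    rewrite ?count_negb_set_mask ?count_set_mask ?(condS_size condA) ?(condS_size condB).
split=> //; apply/condS_AB; first by rewrite size_interleave size_set_mask.
by rewrite inr_pos_interleave proj_split; split=> //; apply: stable_cover.
Qed.

(* The witness C is the set of cycles inside the (σ-stable) set of
   B-positions of w. *)
Lemma split_word_surj (w : seq letterAB) :
  condS precAB ab0 s w -> projAB w = (u, v) ->
  exists2 C : {set {set 'I_n}}, (C \subset porbits s) && split_ok C & w = split_word C.
Proof.
move=> condAB proj_w; have sz := condS_size condAB.
have [stU condA condB] := (condS_AB s w sz).1 condAB.
pose C := [set X in porbits s | X \subset inr_pos n w].
have coverC : cover C = inr_pos n w by apply: cover_porbits_stable.
exists C; last by rewrite /split_word coverC set_mask_inr_pos // -{1}(interleaveK w) proj_w.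
apply/andP; split; first by apply/subsetP => X; rewrite inE => /andP[].
by rewrite /split_ok coverC -[u]/((u, v).1) -[v]/((u, v).2) -proj_w condA condB.
Qed.

End Coproduct.

Lemma SAB_coproduct (K : nzRingType) n (s : 'S_n) (u v : seq letter) :
  SAB K s (u, v) =
  \sum_(C in powerset (porbits s)) SA K (std s (~: cover C)) u * SA K (std s (cover C)) v.
Proof.
pose Cs := [seq C <- enum (powerset (porbits s)) | split_ok s u v C].
have mem_Cs C : (C \in Cs) = (C \subset porbits s) && split_ok s u v C.
  by rewrite mem_filter mem_enum powersetE andbC.
have admissible_Cs w : w \in map (split_word u v) Cs ->
    condS precAB ab0 s w /\ projAB w = (u, v).
  by case/mapP => C; rewrite mem_Cs => /andP[subC okC] ->; apply: split_wordP.
rewrite /SAB /fam_sum (@fam_coefE _ _ _ _ (pmap insub (map (split_word u v) Cs))).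
- rewrite size_pmap_sub (eq_in_count (a2 := predT)) ?count_predT; last first.
    by move=> w /admissible_Cs[].
  rewrite size_map size_filter -sum1_count big_enum_cond /= natr_sum.
  rewrite [LHS]big_mkcond [RHS]big_mkcond; apply: eq_bigr => C _.
  rewrite !SAE -natrM mulnb /split_ok.
  by case: (_ \in _); case: (condS _ _ _ u); case: (condS _ _ _ v).
- apply: pmap_sub_uniq; rewrite map_inj_in_uniq; first exact/filter_uniq/enum_uniq.
  move=> C1 C2 /[!mem_Cs] /andP[sub1 _] /andP[sub2 _] /(congr1 (inr_pos n)).
  by rewrite /split_word !inr_pos_interleave; apply: cover_porbits_inj sub1 sub2.
move=> [w condAB] /=; rewrite mem_pmap_sub /=; split; first by case/admissible_Cs.
move=> proj_w; have [C] := @split_word_surj n s u v w condAB proj_w.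
by rewrite -mem_Cs => Cs_C ->; apply: map_f.
Qed.

Theorem theorem4p1 (K : fieldType) :
  (forall n (s : 'S_n) (w : seq letter),
      SA K s w = (condS precA (0%N, 0%N) s w)%:R) /\
  (forall (ps : seq {n : nat & 'S_n}) (c : {n : nat & 'S_n} -> K),
      uniq ps ->
      (forall w : seq letter, \sum_(p <- ps) c p * SA K (tagged p) w = 0) ->
      forall p, p \in ps -> c p = 0) /\
  (forall n m (s : 'S_n) (t : 'S_m),
      sermul (SA K s) (SA K t) = SA K (pcat s t)) /\
  (forall n (s : 'S_n) (u v : seq letter),
      SAB K s (u, v) =
      \sum_(C in powerset (porbits s))
         SA K (std s (~: cover C)) u * SA K (std s (cover C)) v).
Proof.
split; first exact: SAE.
split; first exact: SA_lin_indep.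
split; first exact: SA_mul.
exact: SAB_coproduct.
Qed.
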